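(* Let $\varepsilon>0$, $\mu\in\mathcal P(\Omega^n)$ and let $\vec V$ be a partition of $[n]$. If $\mu$ fails to be $\varepsilon$-regular with respect to $\vec V$, then there is a partition $\vec W$ of $[n]$ refining $\vec V$ such that $\#\vec W\le2\#\vec V$ and $\mathrm{ind}_\mu(\vec W)\le\mathrm{ind}_\mu(\vec V)-\varepsilon^4/(4|\Omega|^3)$.
   Context: $\Omega$ is a finite nonempty set, $\mathcal P(\Omega^n)$ the set of probability measures on $\Omega^n$, $\|\cdot\|_{TV}$ total variation. For $\sigma\in\Omega^n$, nonempty $S\subset[n]$ and $\omega\in\Omega$ let $\sigma[\omega|S]=|\sigma^{-1}(\omega)\cap S|/|S|$ and $\sigma[\omega|x]=\mathbf 1\{\sigma(x)=\omega\}$; $\langle X(\boldsymbol\sigma)\rangle_\mu=\sum_\sigma\mu(\sigma)X(\sigma)$. For a partition $\vec V=(V_1,\dots,V_k)$ of $[n]$ (size $\#\vec V=k$), $\mathrm{ind}_\mu(\vec V)=\frac1{|\Omega|n}\sum_{\omega}\sum_{j}\sum_{x\in V_j}\langle(\boldsymbol\sigma[\omega|x]-\boldsymbol\sigma[\omega|V_j])^2\rangle_\mu$. $\mu$ is $\varepsilon$-regular on $U\subset[n]$ if for every $S\subset U$ with $|S|\ge\varepsilon|U|$, $\langle\|\boldsymbol\sigma[\cdot|S]-\boldsymbol\sigma[\cdot|U]\|_{TV}\rangle_\mu<\varepsilon$; $\mu$ is $\varepsilon$-regular with respect to $\vec V$ if there is $J\subset[\#\vec V]$ with $\sum_{i\notin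 J}|V_i|<\varepsilon n$ such that $\mu$ is $\varepsilon$-regular on $V_i$ for every $i\in J$. $\vec W$ refines $\vec V$ if each class of $\vec W$ lies in a class of $\vec V$. *)

From HB Require Import structures.
From mathcomp Require Import all_boot all_order all_algebra.
From mathcomp Require Import reals.
Set Implicit Arguments. Unset Strict Implicit. Unset Printing Implicit Defensive.
Import Order.TTheory GRing.Theory Num.Theory.
Local Open Scope ring_scope.

Section Defs.
Variables (R : realType) (Omega : finType) (n : nat).

Definition config := {ffun 'I_n -> Omega}.

Definition is_prob (mu : {ffun config -> R}) : Prop :=
  (forall s, 0 <= mu s) /\ \sum_(s : config) mu s = 1.

Definition expect (mu : {ffun config -> R}) (X : config -> R) : R :=
  \sum_(s : config) mu s * X s.

Definition frac (s : config) (w : Omega) (S : {set 'I_n}) : R :=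
  #|[set x in S | s x == w]|%:R / #|S|%:R.

Definition ind1 (s : config) (w : Omega) (x : 'I_n) : R :=
  (s x == w)%:R.

Definition tvdist (s : config) (S U : {set 'I_n}) : R :=
  2^-1 * \sum_(w : Omega) `|frac s w S - frac s w U|.

Definition index_of (mu : {ffun config -> R}) (P : {set {set 'I_n}}) : R :=
  (#|Omega|%:R * n%:R)^-1 *
  \sum_(w : Omega) \sum_(V in P) \sum_(x in V)
     expect mu (fun s => (ind1 s w x - frac s w V) ^+ 2).

Definition regular_on (mu : {ffun config -> R}) (eps : R) (U : {set 'I_n}) : Prop :=
  forall S : {set 'I_n}, S \subset U -> eps * #|U|%:R <= #|S|%:R ->
    expect mu (fun s => tvdist s S U) < eps.

Definition regular_wrt (mu : {ffun config -> R}) (eps : R) (P : {set {set 'I_n}}) : Prop :=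
  exists J : {set {set 'I_n}}, J \subset P /\
    \sum_(V in P :\: J) #|V|%:R < eps * n%:R /\
    (forall V, V \in J -> regular_on mu eps V).

Definition refines (W P : {set {set 'I_n}}) : Prop :=
  forall B, B \in W -> exists2 A, A \in P & B \subset A.

End Defs.

From HB Require Import structures.
From mathcomp Require Import all_boot all_order all_algebra.
From mathcomp Require Import reals ring lra.
Import Order.TTheory GRing.Theory Num.Theory.
Set Implicit Arguments. Unset Strict Implicit. Unset Printing Implicit Defensive.
Local Open Scope ring_scope.

(* Let [g V] be the expected within-class squared deviation
   [sum_w sum_(x in V) (sigma[w|x] - sigma[w|V])^2], so that the index of a partition is
   [sum_V g V / (|Omega| n)].  Splitting a class [V] into [S] and [V \ S] lowers [g] by at
   least [|S| sum_w (sigma[w|S] - sigma[w|V])^2] (variance decomposition), which by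
   Cauchy-Schwarz is at least [4 |S| TV(S, V)^2 / |Omega|]; by Jensen its expectation is at
   least [4 |S| <TV(S, V)>^2 / |Omega|].  Split every class on which [mu] is irregular along
   a witness [S] with [|S| >= eps |V|] and [<TV(S, V)> >= eps]: each such class gains at least
   [4 eps^3 |V| / |Omega|], and they cover at least [eps n] points, so the index drops by at
   least [4 eps^4 / |Omega|^2]. *)

Lemma sqr_wsum_le (R : realDomainType) (I : finType) (A : pred I) (a x : I -> R) :
  (forall i, 0 <= a i) ->
  (\sum_(i | A i) a i * x i) ^+ 2 <= (\sum_(i | A i) a i) * \sum_(i | A i) a i * x i ^+ 2.
Proof.
move=> a_ge0.
set lhs := _ ^+ 2; set rhs := _ * _.
(* [2 (rhs - lhs)] is the double sum of [a_i a_j (x_i - x_j)^2]. *)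
have rhsE : rhs = \sum_(i | A i) \sum_(j | A j) a i * (a j * x j ^+ 2).
  by rewrite /rhs mulr_suml; apply: eq_bigr => i _; rewrite mulr_sumr.
have rhsE' : rhs = \sum_(i | A i) \sum_(j | A j) a i * x i ^+ 2 * a j.
  by rewrite /rhs mulrC mulr_suml; apply: eq_bigr => i _; rewrite mulr_sumr.
have lhsE : lhs = \sum_(i | A i) \sum_(j | A j) a i * x i * (a j * x j).
  by rewrite /lhs expr2 mulr_suml; apply: eq_bigr => i _; rewrite mulr_sumr.
suff : 0 <= (rhs - lhs) + (rhs - lhs) by lra.
rewrite {1}rhsE rhsE' lhsE -!sumrB -big_split /=; apply: sumr_ge0 => i _.
rewrite -!sumrB -big_split /=; apply: sumr_ge0 => j _.
have -> : a i * (a j * x j ^+ 2) - a i * x i * (a j * x j) +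
    (a i * x i ^+ 2 * a j - a i * x i * (a j * x j)) = a i * a j * (x i - x j) ^+ 2.
  by ring.
by rewrite mulr_ge0 ?sqr_ge0 ?mulr_ge0.
Qed.

Section Mean.
Variables (R : realFieldType) (I : finType).
Implicit Types (A S V : {set I}) (y : I -> R).

Definition mean A y : R := (\sum_(i in A) y i) / #|A|%:R.

Lemma sum_sqr_sub A y c :
  \sum_(i in A) (y i - c) ^+ 2 =
  \sum_(i in A) (y i - mean A y) ^+ 2 + #|A|%:R * (mean A y - c) ^+ 2.
Proof.
have [->|A_neq0] := eqVneq A set0; first by rewrite !big_set0 cards0 mul0r addr0.
set m := mean A y.
have sum_dev0 : \sum_(i in A) (y i - m) = 0.
  rewrite sumrB sumr_const -mulr_natr /m /mean divfK ?subrr //.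
  by rewrite pnatr_eq0 cards_eq0.
rewrite (eq_bigr (fun i => (y i - m) ^+ 2 + 2 * (m - c) * (y i - m) + (m - c) ^+ 2));
  last by move=> i _; ring.
by rewrite !big_split /= -mulr_sumr sum_dev0 mulr0 addr0 sumr_const mulr_natl.
Qed.

Lemma sum_sqr_dev_split S V y : S \subset V ->
  \sum_(i in S) (y i - mean S y) ^+ 2 + \sum_(i in V :\: S) (y i - mean (V :\: S) y) ^+ 2
    + #|S|%:R * (mean S y - mean V y) ^+ 2
  <= \sum_(i in V) (y i - mean V y) ^+ 2.
Proof.
move=> SV; rewrite (big_setID (A := V) S) (setIidPr SV) /=.
rewrite (sum_sqr_sub S y (mean V y)) (sum_sqr_sub (V :\: S) y (mean V y)).
have := mulr_ge0 (ler0n R #|V :\: S|) (sqr_ge0 (mean (V :\: S) y - mean V y)).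
lra.
Qed.

End Mean.

Section Bisection.
Variables (T : finType) (P : {set {set T}}) (f : {set T} -> {set T}).
Hypothesis f_sub : {in P, forall V, f V \subset V}.

Definition piece (q : {set T} * bool) : {set T} := if q.2 then f q.1 else q.1 :\: f q.1.

Definition pieces := [set q in setX P [set: bool] | piece q != set0].

Definition bisect := piece @: pieces.

Lemma piece_sub q : q.1 \in P -> piece q \subset q.1.
Proof. by case: q => V [] /= VP; [apply: f_sub | apply: subsetDl]. Qed.

Lemma mem_piece q x : x \in piece q -> q.2 = (x \in f q.1).
Proof. by case: q => V [] /= => [-> | /setDP[_ /negbTE ->]]. Qed.

Lemma bisect_refines B : B \in bisect -> exists2 V, V \in P & B \subset V.
Proof.
case/imsetP => q; rewrite !inE => /andP[/andP[qP _] _] ->.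
by exists q.1 => //; exact: piece_sub.
Qed.

Lemma card_bisect : (#|bisect| <= 2 * #|P|)%N.
Proof.
apply: leq_trans (leq_imset_card _ _) _.
have /subset_leq_card : pieces \subset setX P [set: bool].
  by apply/subsetP => q; rewrite inE => /andP[].
move/leq_trans; apply.
by rewrite cardsX cardsT card_bool mulnC.
Qed.

Hypothesis trivP : trivIset P.

Lemma piece_eq q q' x : q.1 \in P -> q'.1 \in P ->
  x \in piece q -> x \in piece q' -> q = q'.
Proof.
case: q q' => [V b] [V' b'] /= VP V'P xq xq'.
have eqV : V = V'.
  rewrite -(def_pblock trivP VP (subsetP (piece_sub (q := (V, b)) VP) x xq)).
  exact: def_pblock trivP V'P (subsetP (piece_sub (q := (V', b')) V'P) x xq').
by subst V'; move: (mem_piece xq) (mem_piece xq') => /= -> ->.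
Qed.

Lemma bisect_partition D : partition P D -> partition bisect D.
Proof.
case/and3P => /eqP coverP _ P0; apply/and3P; split.
- apply/eqP/setP => x; rewrite -coverP; apply/bigcupP/idP.
    case=> B /imsetP[q]; rewrite !inE => /andP[/andP[qP _] _] -> xq.
    by apply/bigcupP; exists q.1 => //; exact: subsetP (piece_sub qP) x xq.
  move=> xP; set V := pblock P x; pose q := (V, x \in f V).
  have xq : x \in piece q by rewrite /piece /=; case: ifP => // xfV; rewrite inE xfV mem_pblock.
  exists (piece q) => //; apply: imset_f.
  by rewrite !inE pblock_mem //=; apply/set0Pn; exists x.
- apply/trivIsetP => _ _ /imsetP[q qQ ->] /imsetP[q' q'Q ->] neq.
  rewrite -setI_eq0; apply/set0Pn => -[x]; rewrite inE => /andP[xq xq'].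
  move: qQ q'Q; rewrite !inE => /andP[/andP[qP _] _] /andP[/andP[q'P _] _].
  by move: neq; rewrite (piece_eq qP q'P xq xq') eqxx.
- apply/imsetP => -[q]; rewrite inE => /andP[_ /negP q0] /esym/eqP.
  exact: q0.
Qed.

Lemma big_bisect (M : nmodType) (F : {set T} -> M) : F set0 = 0 ->
  \sum_(B in bisect) F B = \sum_(V in P) (F (f V) + F (V :\: f V)).
Proof.
move=> F0; rewrite big_imset /=; last first.
  move=> q q'; rewrite !inE => /andP[/andP[qP _] qne0] /andP[/andP[q'P _] _] eqq.
  have /set0Pn[x xq] := qne0; apply: (piece_eq qP q'P xq); by rewrite -eqq.
rewrite (eq_bigr (fun V => \sum_b F (piece (V, b)))); last by move=> V _; rewrite big_bool.
rewrite pair_big /= [RHS](bigID (fun q => piece q == set0)) /=.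
rewrite [X in _ = X + _]big1 ?add0r => [|[V b] /andP[_ /eqP ->] //].
by apply: eq_bigl => -[V b]; rewrite !inE andbT.
Qed.

End Bisection.

Section ClassIndex.
Variables (R : realType) (Omega : finType) (n : nat).
Implicit Types (s : config Omega n) (mu : {ffun config Omega n -> R}).
Implicit Types (S V : {set 'I_n}) (P : {set {set 'I_n}}).

Lemma frac_mean s w V : frac R s w V = mean V (ind1 R s w).
Proof.
rewrite /frac /mean /ind1 -natr_sum -sum1_card big_mkcond [in RHS]big_mkcond /=.
by congr (_%:R / _); apply: eq_bigr => x _; rewrite inE; case: (x \in V); case: (s x == w).
Qed.

Lemma expectD mu X Y : expect mu (fun s => X s + Y s) = expect mu X + expect mu Y.
Proof. by rewrite /expect -big_split; apply: eq_bigr => s _; rewrite mulrDr. Qed.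

Lemma expectZ mu c X : expect mu (fun s => c * X s) = c * expect mu X.
Proof. by rewrite /expect mulr_sumr; apply: eq_bigr => s _; rewrite mulrCA. Qed.

Lemma ler_expect mu X Y : (forall s, 0 <= mu s) -> (forall s, X s <= Y s) ->
  expect mu X <= expect mu Y.
Proof. by move=> mu_ge0 XY; apply: ler_sum => s _; rewrite ler_wpM2l. Qed.

Lemma sqr_expect_le mu X : is_prob mu -> expect mu X ^+ 2 <= expect mu (fun s => X s ^+ 2).
Proof. by case=> mu_ge0 mu1; have := sqr_wsum_le xpredT X mu_ge0; rewrite mu1 mul1r. Qed.

Definition sqdev s V : R :=
  \sum_(w : Omega) \sum_(x in V) (ind1 R s w x - frac R s w V) ^+ 2.

Definition class_index mu V : R := expect mu (sqdev^~ V).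

Lemma index_ofE mu (Q : {set {set 'I_n}}) :
  index_of mu Q = (#|Omega|%:R * n%:R)^-1 * \sum_(V in Q) class_index mu V.
Proof.
rewrite /index_of /class_index /expect; congr (_ * _).
rewrite exchange_big; apply: eq_bigr => V _.
under eq_bigr => w _ do rewrite exchange_big.
rewrite exchange_big; apply: eq_bigr => s _.
by rewrite /sqdev mulr_sumr; apply: eq_bigr => w _; rewrite mulr_sumr.
Qed.

Lemma class_index0 mu : class_index mu set0 = 0.
Proof.
rewrite /class_index /expect big1 // => s _.
by rewrite /sqdev big1 ?mulr0 // => w _; rewrite big_set0.
Qed.

Lemma sqdev_split s S V : S \subset V ->
  sqdev s S + sqdev s (V :\: S)
    + #|S|%:R * \sum_(w : Omega) (frac R s w S - frac R s w V) ^+ 2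
  <= sqdev s V.
Proof.
move=> SV; rewrite /sqdev mulr_sumr -!big_split; apply: ler_sum => w _ /=.
by rewrite !frac_mean; apply: sum_sqr_dev_split.
Qed.

Lemma tvdist_sqr_le s S V :
  (2 * tvdist R s S V) ^+ 2
  <= #|Omega|%:R * \sum_(w : Omega) (frac R s w S - frac R s w V) ^+ 2.
Proof.
have := @sqr_wsum_le R Omega xpredT (fun _ => 1) (fun w => `|frac R s w S - frac R s w V|)
  (fun _ => ler01).
rewrite sumr_const !(eq_bigr _ (fun w _ => mul1r _)).
rewrite (eq_bigr _ (fun w _ => real_normK (num_real _))).
by rewrite /tvdist mulrA divff ?pnatr_eq0 // mul1r.
Qed.

Lemma class_index_split mu S V : (0 < #|Omega|)%N -> is_prob mu -> S \subset V ->
  class_index mu S + class_index mu (V :\: S)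
    + 4 * #|S|%:R / #|Omega|%:R * expect mu (fun s => tvdist R s S V) ^+ 2
  <= class_index mu V.
Proof.
move=> Omega_gt0 mu_prob SV; have [mu_ge0 _] := mu_prob.
set k := 4 * #|S|%:R / #|Omega|%:R.
have k_ge0 : 0 <= k by rewrite /k divr_ge0 ?mulr_ge0 ?ler0n.
have pointwise s : sqdev s S + sqdev s (V :\: S) + k * tvdist R s S V ^+ 2 <= sqdev s V.
  apply: le_trans (sqdev_split s SV); rewrite lerD2l.
  have -> : k * tvdist R s S V ^+ 2
      = #|S|%:R * (#|Omega|%:R^-1 * (2 * tvdist R s S V) ^+ 2) by rewrite /k; ring.
  rewrite ler_wpM2l ?ler0n // ler_pdivrMl ?ltr0n //; exact: tvdist_sqr_le.
apply: le_trans (ler_expect mu_ge0 pointwise).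
rewrite !expectD (expectZ mu k) lerD2l ler_wpM2l //; exact: sqr_expect_le.
Qed.

Lemma index_bisect mu P (f : {set 'I_n} -> {set 'I_n}) :
  (0 < #|Omega|)%N -> is_prob mu -> trivIset P -> {in P, forall V, f V \subset V} ->
  index_of mu (bisect P f) + (#|Omega|%:R * n%:R)^-1 *
    \sum_(V in P) 4 * #|f V|%:R / #|Omega|%:R * expect mu (fun s => tvdist R s (f V) V) ^+ 2
  <= index_of mu P.
Proof.
move=> Omega_gt0 mu_prob trivP f_sub.
rewrite !index_ofE (big_bisect f_sub trivP (class_index0 mu)) -mulrDr.
rewrite ler_wpM2l ?invr_ge0 ?mulr_ge0 ?ler0n // -big_split /=.
by apply: ler_sum => V VP; apply: class_index_split; rewrite ?f_sub.
Qed.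

End ClassIndex.

Section Witness.
Variables (R : realType) (Omega : finType) (n : nat).
Variables (eps : R) (mu : {ffun config Omega n -> R}).
Implicit Types (S V : {set 'I_n}) (P : {set {set 'I_n}}).

Definition witnessb V S : bool :=
  [&& S \subset V, eps * #|V|%:R <= #|S|%:R & eps <= expect mu (fun s => tvdist R s S V)].

Definition witness V : {set 'I_n} := odflt V [pick S | witnessb V S].

Lemma witness_sub V : witness V \subset V.
Proof. by rewrite /witness; case: pickP => [S /and3P[] | _]. Qed.

Lemma regular_on_witness V : ~~ witnessb V (witness V) -> regular_on mu eps V.
Proof.
rewrite /witness; case: pickP => [S -> // | noS _ S SV S_large].
by have := noS S; rewrite /witnessb SV S_large /= => /negbT; rewrite -ltNge.
Qed.

Lemma irregular_mass P : ~ regular_wrt mu eps P ->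
  eps * n%:R <= \sum_(V in P | witnessb V (witness V)) #|V|%:R.
Proof.
move=> irregP; rewrite leNgt; apply/negP => small; apply: irregP.
exists [set V in P | ~~ witnessb V (witness V)]; split; last split.
- by apply/subsetP => V; rewrite inE => /andP[].
- rewrite (eq_bigl (fun V => (V \in P) && witnessb V (witness V))) // => V.
  by rewrite !inE; case: (V \in P); case: witnessb.
- by move=> V; rewrite inE => /andP[_]; apply: regular_on_witness.
Qed.

Lemma witness_gain V S : 0 <= eps -> witnessb V S ->
  4 * eps ^+ 3 / #|Omega|%:R * #|V|%:R
  <= 4 * #|S|%:R / #|Omega|%:R * expect mu (fun s => tvdist R s S V) ^+ 2.
Proof.
move=> eps_ge0 /and3P[_ S_large S_far].
set o := #|Omega|%:R; set d := expect _ _.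
have -> : 4 * eps ^+ 3 / o * #|V|%:R = 4 / o * (eps * #|V|%:R) * eps ^+ 2 by ring.
have -> : 4 * #|S|%:R / o * d ^+ 2 = 4 / o * #|S|%:R * d ^+ 2 by ring.
have four_div_ge0 : 0 <= 4 / o by rewrite divr_ge0 ?ler0n.
apply: ler_pM; rewrite ?sqr_ge0 ?ler_wpM2l //.
- by rewrite mulr_ge0 // mulr_ge0 ?ler0n.
- by rewrite !expr2 ler_pM.
Qed.

Lemma sum_witness_gain P : 0 <= eps -> ~ regular_wrt mu eps P ->
  4 * eps ^+ 4 / #|Omega|%:R * n%:R
  <= \sum_(V in P) 4 * #|witness V|%:R / #|Omega|%:R
       * expect mu (fun s => tvdist R s (witness V) V) ^+ 2.
Proof.
move=> eps_ge0 irregP.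
rewrite (bigID (fun V => witnessb V (witness V))) /= -[leLHS]addr0 lerD //; last first.
  by apply: sumr_ge0 => V _; rewrite mulr_ge0 ?sqr_ge0 ?divr_ge0 ?mulr_ge0 ?ler0n.
apply: le_trans (_ : \sum_(V in P | witnessb V (witness V))
    4 * eps ^+ 3 / #|Omega|%:R * #|V|%:R <= _); last first.
  by apply: ler_sum => V /andP[_]; apply: witness_gain.
have -> : 4 * eps ^+ 4 / #|Omega|%:R * n%:R = 4 * eps ^+ 3 / #|Omega|%:R * (eps * n%:R)
  by ring.
rewrite -mulr_sumr ler_wpM2l ?irregular_mass //.
by rewrite divr_ge0 ?mulr_ge0 ?exprn_ge0 ?ler0n.
Qed.

End Witness.

Theorem lemma2p7 (R : realType) (Omega : finType) (n : nat)
    (eps : R) (mu : {ffun config Omega n -> R}) (P : {set {set 'I_n}}) :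
  (0 < #|Omega|)%N -> (0 < n)%N -> 0 < eps ->
  is_prob mu ->
  partition P [set: 'I_n] ->
  ~ regular_wrt mu eps P ->
  exists W : {set {set 'I_n}},
    [/\ partition W [set: 'I_n], refines W P, (#|W| <= 2 * #|P|)%N &
        index_of mu W <= index_of mu P - eps ^+ 4 / (4 * #|Omega|%:R ^+ 3)].
Proof.
move=> Omega_gt0 n_gt0 eps_gt0 mu_prob partP irregP.
have trivP : trivIset P by case/and3P: partP.
pose f := witness eps mu.
have f_sub : {in P, forall V, f V \subset V} by move=> V _; apply: witness_sub.
exists (bisect P f); split.
- exact: bisect_partition.
- exact: bisect_refines.
- exact: card_bisect.
have := index_bisect Omega_gt0 mu_prob trivP f_sub.
have := sum_witness_gain (ltW eps_gt0) irregP.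
set o := #|Omega|%:R; set gain := \sum_(V in P) _.
have o_gt0 : 0 < o by rewrite ltr0n.
have o_ge1 : 1 <= o by rewrite ler1n.
have nR_gt0 : 0 < n%:R :> R by rewrite ltr0n.
move=> gain_ge index_le.
(* The argument yields the drop [4 eps^4 / o^2]; the stated one is weaker since [o >= 1]. *)
have : eps ^+ 4 / (4 * o ^+ 3) <= (o * n%:R)^-1 * gain.
  apply: le_trans (ler_wpM2l _ gain_ge); last by rewrite invr_ge0 mulr_ge0 ?ler0n.
  have -> : (o * n%:R)^-1 * (4 * eps ^+ 4 / o * n%:R) = eps ^+ 4 / o ^+ 2 * 4.
    by field; rewrite ?gt_eqF.
  have -> : eps ^+ 4 / (4 * o ^+ 3) = eps ^+ 4 / o ^+ 2 * (4 * o)^-1.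
    by field; rewrite ?gt_eqF.
  rewrite ler_wpM2l ?divr_ge0 ?exprn_ge0 ?ler0n ?(ltW eps_gt0) //.
  by apply: (@le_trans _ _ 1); [rewrite invf_le1 ?mulr_gt0 //|]; lra.
lra.
Qed.
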